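(* For every $0<\alpha<1$ there exists $n_0$ such that the following holds. Let $G$ be a digraph on $n\ge n_0$ vertices with $\delta^0(G)\ge\alpha n$ and let $M$ be any matching in the complete graph on $V(G)$. Then there is a set $S\subseteq V(G)$ such that: (i) $n/3\le|S|\le 2n/3$; (ii) every $x\in V(G)$ satisfies $d^+_S(x),d^-_S(x),d^+_{\overline S}(x),d^-_{\overline S}(x)\ge\alpha n/6$, where $\overline S=V(G)\setminus S$; (iii) $S$ does not separate $M$.
   Context: $\delta^0(G)=\min\{\delta^+(G),\delta^-(G)\}$. For $S\subseteq V(G)$, $d^\pm_S(x)=|N^\pm_G(x)\cap S|$. A set $S$ separates a matching $M$ (in the complete graph on $V(G)$) if some edge of $M$ has exactly one endvertex in $S$. *)

From mathcomp Require Import all_boot all_order all_algebra.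
From mathcomp Require Import reals.
Set Implicit Arguments. Unset Strict Implicit. Unset Printing Implicit Defensive.

(* A digraph on a finite vertex type T is a loopless relation e : rel T;
   e x y means there is an arc x -> y. *)
Definition loopless (T : finType) (e : rel T) : Prop := forall x, ~~ e x x.

Definition outN (T : finType) (e : rel T) (x : T) : {set T} := [set y | e x y].
Definition inN (T : finType) (e : rel T) (x : T) : {set T} := [set y | e y x].
Definition doutS (T : finType) (e : rel T) (S : {set T}) (x : T) : nat := #|outN e x :&: S|.
Definition dinS (T : finType) (e : rel T) (S : {set T}) (x : T) : nat := #|inN e x :&: S|.

(* minimum semidegree delta^0 = min over x of min(d^+(x), d^-(x));
   the default #|T| is only used for the empty digraph *)
Definition min_semideg (T : finType) (e : rel T) : nat :=
  \big[minn/#|T|]_(x : T) minn #|outN e x| #|inN e x|.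

Definition is_matching (T : finType) (M : rel T) : Prop :=
  (forall x, ~~ M x x) /\ (forall x y, M x y = M y x) /\
  (forall x y z, M x y -> M x z -> y = z).

Definition separates (T : finType) (S : {set T}) (M : rel T) : Prop :=
  exists x y, [/\ M x y, x \in S & y \notin S].

(* Give every class of the matching M (an edge or a single vertex) an
   independent uniform colour and let S be the vertices coloured [true]; such
   an S never separates M.  For a test set A let disc S A = |A ∩ S| - |A \ S|.
   Grouped by matching classes, disc S A is a Rademacher sum whose squared
   weights total at most 2n, so its fourth moment is at most 12 n^2.  Markov's
   inequality on fourth powers and a union bound over the 2n + 1 test sets
   V(G), N^+(x), N^-(x) give a colouring with |disc S A| <= alpha n / 3 for all
   of them once n >> alpha^-4, and this yields (i) and (ii). *)

From mathcomp Require Import all_boot all_order all_algebra.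
From mathcomp Require Import reals.
From mathcomp Require Import ring lra.
Import Order.TTheory GRing.Theory Num.Theory.
Local Open Scope ring_scope.
Set Implicit Arguments. Unset Strict Implicit.

Section RademacherSums.
Variables (R : realFieldType) (T : finType).

Definition sgn (b : bool) : R := if b then 1 else -1.

Lemma sgn_negb b : sgn (~~ b) = - sgn b.
Proof. by case: b; rewrite /sgn /= ?opprK. Qed.

Definition flip (a : T) (f : {ffun T -> bool}) : {ffun T -> bool} :=
  [ffun z => if z == a then ~~ f z else f z].

Lemma flipK a : involutive (flip a).
Proof. by move=> f; apply/ffunP => z; rewrite !ffunE; case: eqP; rewrite ?negbK. Qed.

(* Flipping the colour of a is a bijection of the colourings reversing sgn (f a). *)
Lemma sum_sgn_flip_invariant a (g : {ffun T -> bool} -> R) :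
  (forall f, g (flip a f) = g f) ->
  \sum_(f : {ffun T -> bool}) sgn (f a) * g f = 0.
Proof.
move=> g_flip; set s := \sum_(f : {ffun T -> bool}) _.
suff : s = - s by lra.
rewrite {1}/s (reindex_inj (can_inj (flipK a))) /= -sumrN.
by apply: eq_bigr => f _; rewrite ffunE eqxx g_flip sgn_negb mulNr.
Qed.

Definition sgnsum (c : T -> R) (l : seq T) (f : {ffun T -> bool}) : R :=
  \sum_(z <- l) c z * sgn (f z).

Definition sumsq (c : T -> R) (l : seq T) : R := \sum_(z <- l) c z ^+ 2.

Local Notation ncol := (#|{ffun T -> bool}|%:R : R).

Lemma sgnsum_flip c l a f : a \notin l -> sgnsum c l (flip a f) = sgnsum c l f.
Proof.
move=> al; apply: eq_big_seq => z zl; rewrite ffunE; case: eqP => // za.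
by rewrite -za zl in al.
Qed.

Lemma sumsq_ge0 c l : 0 <= sumsq c l.
Proof. by apply: sumr_ge0 => z _; apply: sqr_ge0. Qed.

Lemma moment2_sgnsum c l : uniq l ->
  \sum_(f : {ffun T -> bool}) sgnsum c l f ^+ 2 = ncol * sumsq c l.
Proof.
elim: l => [_|a l IHl /= /andP[al ul]].
  by rewrite /sumsq big_nil mulr0 big1 // => f _; rewrite /sgnsum big_nil expr0n.
have expand f : sgnsum c (a :: l) f ^+ 2 =
    c a ^+ 2 + 2 * c a * (sgn (f a) * sgnsum c l f) + sgnsum c l f ^+ 2.
  by rewrite /sgnsum big_cons /sgn; case: (f a); ring.
rewrite (eq_bigr _ (fun f _ => expand f)) !big_split /= sumr_const -mulr_sumr.
rewrite sum_sgn_flip_invariant => [|f]; last exact: sgnsum_flip.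
by rewrite IHl // /sumsq big_cons -mulr_natr; ring.
Qed.

Lemma moment4_sgnsum_le c l : uniq l ->
  \sum_(f : {ffun T -> bool}) sgnsum c l f ^+ 4 <= 3 * ncol * sumsq c l ^+ 2.
Proof.
elim: l => [_|a l IHl /= /andP[al ul]].
  rewrite /sumsq big_nil expr0n /= mulr0 big1 // => f _.
  by rewrite /sgnsum big_nil expr0n.
have expand f : sgnsum c (a :: l) f ^+ 4 =
    c a ^+ 4 + 4 * c a ^+ 3 * (sgn (f a) * sgnsum c l f)
    + 6 * c a ^+ 2 * sgnsum c l f ^+ 2
    + 4 * c a * (sgn (f a) * sgnsum c l f ^+ 3) + sgnsum c l f ^+ 4.
  by rewrite /sgnsum big_cons /sgn; case: (f a); ring.
rewrite (eq_bigr _ (fun f _ => expand f)) !big_split /= sumr_const -!mulr_sumr.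
rewrite !sum_sgn_flip_invariant => [|f|f]; rewrite ?sgnsum_flip //.
rewrite moment2_sgnsum // -mulr_natr.
have := IHl ul; have := sumsq_ge0 c l; rewrite /sumsq big_cons -/(sumsq c l).
have : 0 <= c a ^+ 2 by apply: sqr_ge0.
have : 0 <= ncol by apply: ler0n.
have -> : c a ^+ 4 = c a ^+ 2 * c a ^+ 2 by ring.
set v := c a ^+ 2; set q := sumsq c l; set m4 := \sum_(f : {ffun T -> bool}) _.
move=> hN hv hq hm4; nra.
Qed.

End RademacherSums.

Section Discrepancy.
Variables (R : realFieldType) (T : finType).
Implicit Types S A : {set T}.

Definition disc S A : R := \sum_(y in A) sgn R (y \in S).

Lemma disc_setC S A : disc (~: S) A = - disc S A.
Proof. by rewrite /disc -sumrN; apply: eq_bigr => y _; rewrite in_setC sgn_negb. Qed.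

Lemma card_setI_disc S A : #|A :&: S|%:R * 2 = #|A|%:R + disc S A.
Proof.
rewrite -!sum1_card !natr_sum mulr_suml /disc -big_split /=.
rewrite [RHS](bigID (mem S)) [LHS](eq_bigl (fun y => (y \in A) && (y \in S))) /=.
  rewrite [X in _ = _ + X]big1 ?addr0 => [|y /andP[_ /negbTE->]]; last first.
    by rewrite /sgn; ring.
  by apply: eq_bigr => y /andP[_ ->]; rewrite /sgn; ring.
by move=> y; rewrite inE.
Qed.

Lemma card_setI_ge S A (d : R) :
  `|disc S A| <= d -> (#|A|%:R - d) / 2 <= #|A :&: S|%:R.
Proof. by rewrite ler_norml => /andP[? ?]; have := card_setI_disc S A; lra. Qed.

Lemma card_setI_le S A (d : R) :
  `|disc S A| <= d -> #|A :&: S|%:R <= (#|A|%:R + d) / 2.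
Proof. by rewrite ler_norml => /andP[? ?]; have := card_setI_disc S A; lra. Qed.

End Discrepancy.

Section MatchingColourings.
Variables (T : finType) (M : rel T).
Hypothesis matchingM : is_matching M.

Definition match_rep (x : T) : T :=
  if [pick y | M x y] is Some y then
    if (enum_rank y < enum_rank x)%N then y else x
  else x.

Lemma match_rep_cases x : match_rep x = x \/ M x (match_rep x).
Proof.
rewrite /match_rep; case: pickP => [y Mxy|_]; last by left.
by case: ifP => _; [right|left].
Qed.

Lemma match_rep_eq x y : M x y -> match_rep x = match_rep y.
Proof.
case: matchingM => _ [Msym Muniq] Mxy; rewrite /match_rep.
case: pickP => [x' Mxx'|/(_ y)]; last by rewrite Mxy.
rewrite (Muniq _ _ _ Mxx' Mxy).
case: pickP => [y' Myy'|/(_ x)]; last by rewrite Msym Mxy.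
rewrite Msym in Mxy; rewrite (Muniq _ _ _ Myy' Mxy).
case: (ltngtP (enum_rank y) (enum_rank x)) => //.
by move/val_inj/enum_rank_inj => ->.
Qed.

Lemma card_match_class_le2 z : (#|[set y | match_rep y == z]| <= 2)%N.
Proof.
case: matchingM => _ [Msym Muniq].
have sub : [set y | match_rep y == z] \subset z |: [set y | M z y].
  apply/subsetP => y; rewrite !inE => /eqP <-.
  by case: (match_rep_cases y) => [->|Myz]; rewrite ?eqxx // Msym Myz orbT.
apply: leq_trans (subset_leq_card sub) _.
rewrite cardsU1 (leq_add (leq_b1 _)) //.
by apply/card_le1_eqP => u v; rewrite !inE => Mzu Mzv; apply: Muniq Mzv Mzu.
Qed.

Definition matched_set (f : {ffun T -> bool}) : {set T} := [set y | f (match_rep y)].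

Lemma matched_set_not_separates f : ~ separates (matched_set f) M.
Proof. by case=> u [v [Muv]]; rewrite !inE (match_rep_eq Muv) => ->. Qed.

Variable R : realFieldType.

Definition class_weight (A : {set T}) (z : T) : R :=
  #|[set y in A | match_rep y == z]|%:R.

Lemma disc_matched_set A f :
  disc R (matched_set f) A = sgnsum (class_weight A) (index_enum T) f.
Proof.
rewrite /disc (partition_big match_rep xpredT) //=.
apply: eq_bigr => z _.
rewrite (eq_bigr (fun _ => sgn R (f z))) => [|y /andP[_ /eqP <-]]; last by rewrite inE.
rewrite (eq_bigl (mem [set y in A | match_rep y == z])) => [|y]; last by rewrite !inE.
by rewrite sumr_const /class_weight mulr_natl.
Qed.

Lemma sum_class_weight A : \sum_z class_weight A z = #|A|%:R.
Proof.
rewrite /class_weight -natr_sum; congr _%:R.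
rewrite -[RHS]sum1_card [RHS](partition_big match_rep xpredT) //=.
by apply: eq_bigr => z _; rewrite -sum1_card; apply: eq_bigl => y; rewrite !inE.
Qed.

Lemma sumsq_class_weight_le A : sumsq (class_weight A) (index_enum T) <= 2 * #|T|%:R.
Proof.
apply: le_trans (_ : \sum_z 2 * class_weight A z <= _).
  apply: ler_sum => z _.
  have w_ge0 : 0 <= class_weight A z by apply: ler0n.
  have w_le2 : class_weight A z <= 2.
    rewrite /class_weight ler_nat (leq_trans _ (card_match_class_le2 z)) //.
    by apply: subset_leq_card; apply/subsetP => y; rewrite !inE => /andP[].
  nra.
by rewrite -mulr_sumr sum_class_weight ler_wpM2l // ler_nat max_card.
Qed.

Lemma moment4_disc_matched_set_le A :
  \sum_(f : {ffun T -> bool}) disc R (matched_set f) A ^+ 4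
    <= 12 * #|T|%:R ^+ 2 * #|{ffun T -> bool}|%:R.
Proof.
under eq_bigr do rewrite disc_matched_set.
apply: le_trans (moment4_sgnsum_le _ (index_enum_uniq T)) _.
have := sumsq_class_weight_le A; have := sumsq_ge0 (class_weight A) (index_enum T).
have : 0 <= #|{ffun T -> bool}|%:R :> R by apply: ler0n.
set q := sumsq _ _; set n := #|T|%:R; set N := #|{ffun T -> bool}|%:R.
move=> N_ge0 q_ge0 q_le; have : q ^+ 2 <= 4 * n ^+ 2 by nra.
nra.
Qed.

End MatchingColourings.

Lemma exists_all_small_of_moment4 (R : realFieldType) (I C : finType)
    (Y : I -> C -> R) (d B : R) :
  0 < d -> (0 < #|C|)%N ->
  (forall i, \sum_c Y i c ^+ 4 <= B * #|C|%:R) ->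
  #|I|%:R * B < d ^+ 4 ->
  exists c, forall i, `|Y i c| <= d.
Proof.
move=> d_gt0 C_gt0 moment budget.
case: (pickP [pred c | [forall i, `|Y i c| <= d]]) => [c /forallP small|none].
  by exists c.
have large c : d ^+ 4 <= \sum_i Y i c ^+ 4.
  have /forallPn[i] := none c; rewrite -ltNge => Yi_large.
  rewrite (bigD1 i) //= -[d ^+ 4]addr0 lerD //; last first.
    by apply: sumr_ge0 => j _; apply: exprn_even_ge0.
  rewrite -[Y i c ^+ 4]ger0_norm ?exprn_even_ge0 // normrX.
  by apply: lerXn2r; rewrite ?nnegrE ?ltW // (lt_trans d_gt0).
have lower : #|C|%:R * d ^+ 4 <= \sum_i \sum_c Y i c ^+ 4.
  by rewrite exchange_big /= mulr_natl -sumr_const ler_sum.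
have upper : \sum_i \sum_c Y i c ^+ 4 <= #|I|%:R * B * #|C|%:R.
  by rewrite -mulrA mulr_natl -sumr_const ler_sum.
have C_pos : 0 < #|C|%:R :> R by rewrite ltr0n.
nra.
Qed.

Lemma min_semideg_le (T : finType) (e : rel T) x :
  (min_semideg e <= minn #|outN e x| #|inN e x|)%N.
Proof.
rewrite /min_semideg; elim: (index_enum T) (mem_index_enum x) => [//|y s IHs].
rewrite in_cons big_cons => /orP[/eqP->|/IHs]; first exact: geq_minl.
exact: leq_trans (geq_minr _ _).
Qed.

Lemma union_bound_budget (R : realFieldType) (a n : R) :
  0 < a < 1 -> 3000 / a ^+ 4 < n ->
  (2 * n + 1) * (12 * n ^+ 2) < (a * n / 3) ^+ 4.
Proof.
case/andP=> a_gt0 a_lt1; set t := a ^+ 4.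
have t_gt0 : 0 < t by rewrite exprn_gt0.
have t_lt1 : t < 1 by rewrite exprn_ilt1 // ltW.
rewrite ltr_pdivrMr // mulrC => tn_large.
have n_large : 3000 < n by nra.
have -> : (a * n / 3) ^+ 4 = t * n * n ^+ 3 / 81 by rewrite /t; field.
have n3_pos : 0 < n ^+ 3 by rewrite exprn_gt0 //; lra.
have -> : (2 * n + 1) * (12 * n ^+ 2) = (24 + 12 / n) * n ^+ 3.
  by field; lra.
have : 12 / n < 1 by rewrite ltr_pdivrMr; lra.
nra.
Qed.

Theorem lemma3p5 (R : realType) (alpha : R) :
  0 < alpha < 1 ->
  exists n0 : nat,
  forall (T : finType) (e : rel T) (M : rel T),
    (n0 <= #|T|)%N ->
    loopless e ->
    alpha * #|T|%:R <= (min_semideg e)%:R ->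
    is_matching M ->
    exists S : {set T},
      [/\ #|T|%:R / 3 <= #|S|%:R :> R, #|S|%:R <= 2 * #|T|%:R / 3 :> R,
          (forall x : T,
             [/\ alpha * #|T|%:R / 6 <= (doutS e S x)%:R,
                 alpha * #|T|%:R / 6 <= (dinS e S x)%:R,
                 alpha * #|T|%:R / 6 <= (doutS e (~: S) x)%:R &
                 alpha * #|T|%:R / 6 <= (dinS e (~: S) x)%:R])
        & ~ separates S M].
Proof.
case/andP=> alpha_gt0 alpha_lt1.
exists (Num.truncn (3000 / alpha ^+ 4)).+1 => T e M n0_le _ mindeg matchingM.
set n : R := #|T|%:R.
have n_large : 3000 / alpha ^+ 4 < n by apply: lt_le_trans (truncnS_gt _) _; rewrite ler_nat.
have an_gt0 : 0 < alpha * n.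
  by rewrite mulr_gt0 // (lt_trans _ n_large) // divr_gt0 ?exprn_gt0.
pose test (i : option (bool * T)) : {set T} :=
  if i is Some (b, x) then if b then outN e x else inN e x else [set: T].
have [f small] : exists f : {ffun T -> bool},
    forall i, `|disc R (matched_set M f) (test i)| <= alpha * n / 3.
  apply: (exists_all_small_of_moment4 (B := 12 * n ^+ 2)).
  - by rewrite divr_gt0.
  - by rewrite card_ffun card_bool expn_gt0.
  - by move=> i; exact: moment4_disc_matched_set_le.
  - rewrite card_option card_prod card_bool -addn1 natrD natrM -/n.
    by apply: union_bound_budget => //; apply/andP.
have smallC i : `|disc R (~: matched_set M f) (test i)| <= alpha * n / 3.
  by rewrite disc_setC normrN.
have an_le_n : alpha * n <= n by rewrite ler_piMl // ltW // (lt_trans _ n_large).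
have card_S_bounds := conj (card_setI_ge (small None)) (card_setI_le (small None)).
rewrite /= setTI cardsT -/n in card_S_bounds.
exists (matched_set M f); split; [lra|lra| |exact: matched_set_not_separates].
move=> x; have [dout din] : alpha * n <= #|outN e x|%:R /\ alpha * n <= #|inN e x|%:R.
  have := min_semideg_le e x; rewrite leq_min => /andP[dout din].
  by split; apply: le_trans mindeg _; rewrite ler_nat.
have := card_setI_ge (small (Some (true, x))); have := card_setI_ge (small (Some (false, x))).
have := card_setI_ge (smallC (Some (true, x))); have := card_setI_ge (smallC (Some (false, x))).
rewrite /doutS /dinS /=; split; lra.
Qed.
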